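(* Let $N\geq 2$, $k\geq 1$ be integers, $s\in\left(-\frac{1}{N-1},1\right)$, and let $\Gamma(N,k)$ be the $N^k\times N^k$ matrix with rows and columns indexed by functions $\sigma,\tau:\{1,\dots,k\}\to\{1,\dots,N\}$ and entries $\Gamma(N,k)_{\sigma\tau}=s^{|\{t:\sigma(t)\neq\tau(t)\}|}$ (the Gram matrix of the states $|\psi_{\sigma(1)}\rangle\otimes\cdots\otimes|\psi_{\sigma(k)}\rangle$ where $|\psi_1\rangle,\dots,|\psi_N\rangle$ are unit vectors with pairwise inner products $s$). Then there exists an $N^k\times N^k$ positive semidefinite matrix $Z(N,k)$, all of whose diagonal entries equal $1/N^k$, such that $$\operatorname{tr}\left[\Gamma(N,k)Z(N,k)\right]=\begin{cases}(1-s)^k, & s\in[0,1),\\ \left[1+(N-1)s\right]^k, & s\in\left(-\frac{1}{N-1},0\right].\end{cases}$$ *)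

From HB Require Import structures.
From mathcomp Require Import all_boot all_order all_algebra.
From mathcomp Require Import reals.
Set Implicit Arguments. Unset Strict Implicit. Unset Printing Implicit Defensive.
Import Order.TTheory GRing.Theory Num.Theory.
Local Open Scope ring_scope.

Definition idx (N k : nat) := {ffun 'I_k -> 'I_N}.

(* Matrices indexed by idx N k, via the canonical enumeration of the finType. *)
Notation dimG N k := #|{: idx N k}|.

Definition Gamma (R : ringType) (N k : nat) (s : R) : 'M[R]_(dimG N k) :=
  \matrix_(i, j) s ^+ #|[set t | (enum_val i : idx N k) t != (enum_val j : idx N k) t]|.

Definition psd (R : numDomainType) (n : nat) (Z : 'M[R]_n) : Prop :=
  Z^T = Z /\ forall x : 'cV[R]_n, 0 <= (x^T *m Z *m x) ord0 ord0.

From HB Require Import structures.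
From mathcomp Require Import all_boot all_order all_algebra.
From mathcomp Require Import reals.
From mathcomp Require Import ring.
Set Implicit Arguments. Unset Strict Implicit. Unset Printing Implicit Defensive.
Import Order.TTheory GRing.Theory Num.Theory.
Local Open Scope ring_scope.

(* Gamma is the k-th tensor power of the N x N overlap matrix A (1 on the
   diagonal, s off it), and we take Z = N^-k W^(x)k for an N x N matrix W with
   unit diagonal. Tensor powers are multiplicative and tr (M^(x)k) = (tr M)^k,
   so tr (Gamma Z) = (tr (A W) / N)^k; and Z is positive semidefinite when W is
   a Gram matrix U^T U, since W^(x)k is then the Gram matrix of U^(x)k.
   W proportional to the centring projection I - J/N gives 1 - s, and the
   all-ones matrix W = J gives 1 + (N - 1) s. Both witnesses work for every s. *)

Section TensorPower.
Variables (R : comPzRingType) (k : nat).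

Definition tensor_pow m n (A : 'M[R]_(m, n)) : 'M[R]_(dimG m k, dimG n k) :=
  \matrix_(i, j) \prod_t A ((enum_val i : idx m k) t) ((enum_val j : idx n k) t).

Lemma sum_enum_idx n (F : idx n k -> R) :
  \sum_(i < dimG n k) F (enum_val i) = \sum_(f : idx n k) F f.
Proof. by rewrite -big_enum_val. Qed.

Lemma trmx_tensor_pow m n (A : 'M[R]_(m, n)) :
  (tensor_pow A)^T = tensor_pow A^T.
Proof.
by apply/matrixP => i j; rewrite !mxE; apply: eq_bigr => t _; rewrite mxE.
Qed.

Lemma mul_tensor_pow m n p (A : 'M[R]_(m, n)) (B : 'M[R]_(n, p)) :
  tensor_pow A *m tensor_pow B = tensor_pow (A *m B).
Proof.
apply/matrixP => i j; rewrite !mxE.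
under [RHS]eq_bigr => t _ do rewrite mxE.
rewrite bigA_distr_bigA /= -sum_enum_idx.
by apply: eq_bigr => l _; rewrite !mxE -big_split.
Qed.

Lemma mxtrace_tensor_pow n (A : 'M[R]_n) : \tr (tensor_pow A) = \tr A ^+ k.
Proof.
rewrite /mxtrace -[k in RHS]card_ord -prodr_const bigA_distr_bigA /=.
rewrite -sum_enum_idx.
by apply: eq_bigr => i _; rewrite mxE.
Qed.

End TensorPower.

Section PositiveSemidefinite.
Variable R : realFieldType.

Lemma psd_gram m n (U : 'M[R]_(m, n)) : psd (U^T *m U).
Proof.
split; first by rewrite trmx_mul trmxK.
move=> x; rewrite mulmxA -trmx_mul -mulmxA mxE.
by apply: sumr_ge0 => i _; rewrite mxE -expr2 sqr_ge0.
Qed.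

Lemma psdZ n (a : R) (Z : 'M[R]_n) : 0 <= a -> psd Z -> psd (a *: Z).
Proof.
move=> a_ge0 [symZ posZ]; split; first by rewrite linearZ /= symZ.
by move=> x; rewrite -scalemxAr -scalemxAl mxE mulr_ge0.
Qed.

Lemma psd_tensor_pow_gram k m n (U : 'M[R]_(m, n)) :
  psd (tensor_pow k (U^T *m U)).
Proof. by rewrite -mul_tensor_pow -trmx_tensor_pow; apply: psd_gram. Qed.

End PositiveSemidefinite.

Definition overlap (R : pzRingType) (N : nat) (s : R) : 'M[R]_N :=
  \matrix_(a, b) if a == b then 1 else s.

Lemma Gamma_tensor_pow (R : comNzRingType) (N k : nat) (s : R) :
  Gamma N k s = tensor_pow k (overlap N s).
Proof.
apply/matrixP => i j; rewrite !mxE -prodr_const big_mkcond /=.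
by apply: eq_bigr => t _; rewrite !inE mxE; case: eqP.
Qed.

Lemma overlap_row_sum (R : comPzRingType) (N : nat) (s c : R) (a : 'I_N)
    (F : 'I_N -> R) :
  (forall b, b != a -> F b = c) ->
  \sum_b overlap N s a b * F b = F a + N.-1%:R * s * c.
Proof.
move=> Fc; rewrite (bigD1 a) //= mxE eqxx mul1r; congr (_ + _).
rewrite (eq_bigr (fun=> s * c)) => [|b ba].
  by rewrite sumr_const cardC1 card_ord -mulrA mulr_natl.
by rewrite mxE eq_sym (negPf ba) Fc.
Qed.

Lemma tensor_gram_witness (R : realFieldType) (N k m : nat) (s d e : R)
    (U : 'M[R]_(m, N)) :
  (0 < N)%N -> 0 < d ->
  (forall a, (U^T *m U) a a = d) ->
  (forall a, \sum_b overlap N s a b * (U^T *m U) b a = e) ->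
  exists Z : 'M[R]_(dimG N k),
    [/\ psd Z, forall i, Z i i = ((N ^ k)%:R)^-1
      & \tr (Gamma N k s *m Z) = (e / d) ^+ k].
Proof.
move=> N_gt0 d_gt0 diagG rowG; set G := U^T *m U.
have N_neq0 : N%:R != 0 :> R by rewrite pnatr_eq0 -lt0n.
have d_neq0 : d != 0 by rewrite gt_eqF.
exists (((N ^ k)%:R * d ^+ k)^-1 *: tensor_pow k G); split.
- apply: psdZ; last exact: psd_tensor_pow_gram.
  by rewrite invr_ge0 mulr_ge0 ?ler0n ?exprn_ge0 ?ltW.
- move=> i; rewrite !mxE (eq_bigr (fun=> d)) => [|t _]; last exact: diagG.
  by rewrite prodr_const card_ord natrX; field; rewrite !expf_neq0.
- have trAG : \tr (overlap N s *m G) = N%:R * e.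
    rewrite /mxtrace (eq_bigr (fun=> e)) => [|a _]; last by rewrite mxE rowG.
    by rewrite sumr_const card_ord mulr_natl.
  rewrite Gamma_tensor_pow -scalemxAr mxtraceZ mul_tensor_pow mxtrace_tensor_pow.
  rewrite trAG natrX exprMn expr_div_n invfM mulrACA mulVf ?expf_neq0 //.
  by rewrite mul1r mulrC.
Qed.

Definition centred_mx (R : pzRingType) (n : nat) : 'M[R]_n :=
  n%:R%:M - const_mx 1.

Lemma trmx_centred_mx (R : pzRingType) n : (centred_mx R n)^T = centred_mx R n.
Proof. by rewrite linearB /= tr_scalar_mx trmx_const. Qed.

Lemma const_mx1_mul (R : pzRingType) m n p :
  const_mx 1 *m (const_mx 1 : 'M[R]_(n, p))
    = n%:R *: const_mx 1 :> 'M[R]_(m, p).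
Proof.
apply/matrixP => i j; rewrite !mxE (eq_bigr (fun=> 1)) => [|l _].
  by rewrite sumr_const card_ord mulr1.
by rewrite !mxE mulr1.
Qed.

Lemma centred_mx_sqr (R : comPzRingType) n :
  centred_mx R n *m centred_mx R n = n%:R *: centred_mx R n.
Proof.
rewrite [X in X *m _]/centred_mx mulmxBl mul_scalar_mx [X in _ *m X]/centred_mx.
by rewrite mulmxBr mul_mx_scalar const_mx1_mul subrr subr0.
Qed.

Lemma centred_witness (R : realFieldType) (N k : nat) (s : R) : (1 < N)%N ->
  exists Z : 'M[R]_(dimG N k),
    [/\ psd Z, forall i, Z i i = ((N ^ k)%:R)^-1
      & \tr (Gamma N k s *m Z) = (1 - s) ^+ k].
Proof.
move=> N_gt1; set d : R := N%:R * (N%:R - 1).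
have d_gt0 : 0 < d by rewrite mulr_gt0 ?ltr0n ?subr_gt0 ?ltr1n // ltnW.
have gramE : (centred_mx R N)^T *m centred_mx R N = N%:R *: centred_mx R N.
  by rewrite trmx_centred_mx centred_mx_sqr.
have := @tensor_gram_witness R N k N s d ((1 - s) * d) (centred_mx R N)
  (ltnW N_gt1) d_gt0.
rewrite mulfK ?gt_eqF //; apply => a.
  by rewrite gramE !mxE eqxx mulr1n.
rewrite (@overlap_row_sum _ _ s (- N%:R)) => [|b ba]; last first.
  by rewrite gramE !mxE (negPf ba) mulr0n sub0r mulrN1.
by rewrite gramE !mxE eqxx mulr1n -subn1 natrB 1?ltnW // /d; ring.
Qed.

Lemma uniform_witness (R : realFieldType) (N k : nat) (s : R) : (0 < N)%N ->
  exists Z : 'M[R]_(dimG N k),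
    [/\ psd Z, forall i, Z i i = ((N ^ k)%:R)^-1
      & \tr (Gamma N k s *m Z) = (1 + N.-1%:R * s) ^+ k].
Proof.
move=> N_gt0; set U : 'M[R]_(1, N) := const_mx 1.
have gramE : U^T *m U = const_mx 1 by rewrite trmx_const const_mx1_mul scale1r.
have := @tensor_gram_witness R N k 1 s 1 (1 + N.-1%:R * s) U N_gt0 ltr01.
rewrite divr1; apply => a; first by rewrite gramE mxE.
by rewrite (@overlap_row_sum _ _ s 1) => [|b _]; rewrite gramE mxE ?mulr1.
Qed.

Theorem theorem4 (R : realType) (N k : nat) (s : R) :
  (2 <= N)%N -> (1 <= k)%N ->
  - (N.-1%:R)^-1 < s -> s < 1 ->
  exists Z : 'M[R]_(dimG N k),
    psd Z /\
    (forall i, Z i i = ((N ^ k)%:R)^-1) /\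
    \tr (Gamma N k s *m Z) =
      (if 0 <= s then (1 - s) ^+ k else (1 + N.-1%:R * s) ^+ k).
Proof.
move=> N_gt1 _ _ _; case: ifP => _.
- by have [Z []] := centred_witness k s N_gt1; exists Z.
- by have [Z []] := uniform_witness k s (ltnW N_gt1); exists Z.
Qed.
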